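(* Suppose all speeds are integer multiples of a common factor $\epsilon\in(0,1]$ and the protocol is run with $\alpha=4s_{\max}/\epsilon$. If the system is in a state $x$ that is not a Nash equilibrium, then for every round $k\ge0$ \[ \mathbb{E}\big[\Psi_1(X^k)-\Psi_1(X^{k+1})\,\big|\,X^k=x\big] \ge \frac{\epsilon^2}{8\,\Delta\, s_{\max}^3}. \]
   Context: $G=(V,E)$ is an undirected graph on $n$ vertices (processors) with maximum degree $\Delta$; $\deg(i)$ is the degree and $d_{ij}=\max\{\deg(i),\deg(j)\}$. Processor $i$ has speed $s_i=n_i\epsilon$ with $n_i$ a positive integer, speeds scaled so that the smallest speed is $1$; $s_{\max}=\max_i s_i$, $\mathcal{S}=\sum_i s_i$. There are $m$ unit tasks; in state $x$, $w_i(x)$ is the number of tasks on $i$ and $\ell_i(x)=w_i(x)/s_i$. Protocol: in each round every task, independently, with $i$ its current processor, chooses a uniformly random neighbor $j$; if $\ell_i-\ell_j>1/s_j$ it moves to $j$ with probability $\frac{\deg(i)}{d_{ij}}\cdot\frac{\ell_i-\ell_j}{\alpha(1/s_i+1/s_j)w_i}$, otherwise stays. $X^k$ is the state after $k$ rounds. $\Psi_1(x)=\sum_i \frac{w_i(x)(w_i(x)+1)}{s_i}-\frac{m^2}{\mathcal{S}}-\frac{mn}{\mathcal{S}}-\frac{n^2}{4\mathcal{S}}+\frac14\sum_i\frac{1}{s_i}$. A state is a Nash equilibrium if $\ell_i-\ell_j\le 1/s_j$ for every ordered pair $(i,j)$ of adjacent processors. *)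

From HB Require Import structures.
From mathcomp Require Import all_boot all_order all_algebra.
Set Implicit Arguments. Unset Strict Implicit. Unset Printing Implicit Defensive.
Import Order.TTheory GRing.Theory Num.Theory.
Local Open Scope ring_scope.

(* Processors are 'I_n, tasks are 'I_m.  A configuration assigns each task
   to a processor: a : {ffun 'I_m -> 'I_n}.  The graph is e : rel 'I_n. *)

Definition state (n m : nat) := {ffun 'I_m -> 'I_n}.

Definition load (n m : nat) (a : state n m) (i : 'I_n) : nat :=
  #|[set t | a t == i]|.

Definition deg (n : nat) (e : rel 'I_n) (i : 'I_n) : nat := #|[set j | e i j]|.

Definition Delta (n : nat) (e : rel 'I_n) : nat := \max_(i < n) deg e i.

Definition dmax (n : nat) (e : rel 'I_n) (i j : 'I_n) : nat :=
  maxn (deg e i) (deg e j).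

Definition smax (R : realFieldType) (n : nat) (s : 'I_n -> R) : R :=
  \big[Num.max/0]_(i < n) s i.

Definition Stot (R : realFieldType) (n : nat) (s : 'I_n -> R) : R :=
  \sum_(i < n) s i.

Definition ell (R : realFieldType) (n : nat) (s : 'I_n -> R) (w : 'I_n -> nat)
  (i : 'I_n) : R := (w i)%:R / s i.

Definition is_NE (R : realFieldType) (n : nat) (e : rel 'I_n) (s : 'I_n -> R)
  (w : 'I_n -> nat) : Prop :=
  forall i j, e i j -> ell s w i - ell s w j <= (s j)^-1.

(* Probability that a task on i (in a state with load vector w) picks neighbor j
   (prob. 1/deg i) and then moves to j. *)
Definition move_prob (R : realFieldType) (n : nat) (e : rel 'I_n)
  (s : 'I_n -> R) (alpha : R) (w : 'I_n -> nat) (i j : 'I_n) : R :=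
  if e i j && (ell s w i - ell s w j > (s j)^-1) then
    ((deg e i)%:R)^-1 *
    ((deg e i)%:R / (dmax e i j)%:R *
     ((ell s w i - ell s w j) /
      (alpha * ((s i)^-1 + (s j)^-1) * (w i)%:R)))
  else 0.

Definition task_trans (R : realFieldType) (n : nat) (e : rel 'I_n)
  (s : 'I_n -> R) (alpha : R) (w : 'I_n -> nat) (i j : 'I_n) : R :=
  if i == j then 1 - \sum_(k < n | k != i) move_prob e s alpha w i k
  else move_prob e s alpha w i j.

Definition step_prob (R : realFieldType) (n m : nat) (e : rel 'I_n)
  (s : 'I_n -> R) (alpha : R) (a b : state n m) : R :=
  \prod_(t < m) task_trans e s alpha (load a) (a t) (b t).

Fixpoint dist (R : realFieldType) (n m : nat) (e : rel 'I_n)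
  (s : 'I_n -> R) (alpha : R) (mu0 : state n m -> R) (k : nat)
  : state n m -> R :=
  match k with
  | O => mu0
  | S k' => fun b => \sum_(a : state n m)
                      dist e s alpha mu0 k' a * step_prob e s alpha a b
  end.

Definition Psi1 (R : realFieldType) (n m : nat) (s : 'I_n -> R)
  (w : 'I_n -> nat) : R :=
  \sum_(i < n) (w i)%:R * ((w i)%:R + 1) / s i
  - (m%:R ^+ 2) / Stot s - (m%:R * n%:R) / Stot s
  - (n%:R ^+ 2) / (4 * Stot s) + 4^-1 * \sum_(i < n) (s i)^-1.

(* The event X^k = x (x a load vector) *)
Definition has_load (n m : nat) (x : 'I_n -> nat) (a : state n m) : bool :=
  [forall i, load a i == x i].

(* E[Psi1(X^k) - Psi1(X^{k+1}) | X^k = x], computed from the joint law of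
   (X^k, X^{k+1}). *)
Definition cond_drop (R : realFieldType) (n m : nat) (e : rel 'I_n)
  (s : 'I_n -> R) (alpha : R) (mu0 : state n m -> R) (k : nat)
  (x : 'I_n -> nat) : R :=
  (\sum_(a : state n m | has_load x a) \sum_(b : state n m)
      dist e s alpha mu0 k a * step_prob e s alpha a b
      * (Psi1 m s (load a) - Psi1 m s (load b)))
  / (\sum_(a : state n m | has_load x a) dist e s alpha mu0 k a).

From HB Require Import structures.
From mathcomp Require Import all_boot all_order all_algebra.
From mathcomp Require Import ring lra.
From Stdlib Require Import FunctionalExtensionality.
Set Implicit Arguments. Unset Strict Implicit. Unset Printing Implicit Defensive.
Import Order.TTheory GRing.Theory Num.Theory.
Local Open Scope ring_scope.

(* Tasks move independently, so from a state with loads w the new load W_i is a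
   sum of independent indicators and E[W_i (W_i + 1)] = mu_i^2 + 2 mu_i minus
   the sum of the squared probabilities; this gives the expected drop of Psi_1
   exactly.  With phi_ij = w_i p_ij the expected flow from i to j, the mean is
   mu_i = w_i + (net inflow), the variance is at most the total flow through i,
   and Cauchy-Schwarz over the deg(i) neighbours bounds the squared net inflow.
   Regrouping by ordered pairs, the drop is at least the sum of the pair gains
   2 phi_ij (l_i - l_j - 1/s_j) - phi_ij^2 (deg i / s_i + deg j / s_j), all
   nonnegative.  For a pair violating the Nash condition, integrality of the
   speeds in units of eps forces l_i - l_j - 1/s_j >= eps / (s_i s_j), and the
   choice alpha = 4 s_max / eps makes the quadratic term at most half of the
   linear one, leaving at least eps^2 / (8 Delta s_max^3). *)

Section ProductLaw.

Variables (R : comRingType) (I J : finType) (p : I -> J -> R).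

Lemma expect_prod (h : I -> J -> R) :
  \sum_(b : {ffun I -> J}) (\prod_t p t (b t)) * \prod_t h t (b t)
  = \prod_t \sum_j p t j * h t j.
Proof. by rewrite bigA_distr_bigA; apply: eq_bigr => b _; rewrite big_split. Qed.

Hypothesis p_sum1 : forall t, \sum_j p t j = 1.

Lemma sum_prod_law : \sum_(b : {ffun I -> J}) \prod_t p t (b t) = 1.
Proof. by rewrite -bigA_distr_bigA big1. Qed.

Lemma expect_indicators (A : pred I) (i : J) :
  \sum_(b : {ffun I -> J}) (\prod_t p t (b t)) * \prod_(t | A t) (b t == i)%:R
  = \prod_(t | A t) p t i.
Proof.
transitivity (\prod_t \sum_j p t j * (if A t then (j == i)%:R else 1)).
  rewrite -(expect_prod (fun t j => if A t then (j == i)%:R else 1)).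
  by apply: eq_bigr => b _; rewrite [X in _ * X]big_mkcond.
rewrite [RHS]big_mkcond.
apply: eq_bigr => t _; case: (A t); last by under eq_bigr do rewrite mulr1.
rewrite (bigD1 i) //= eqxx mulr1 big1 ?addr0 // => j /negPf ->.
by rewrite mulr0.
Qed.

Lemma expect_indicator t0 i :
  \sum_(b : {ffun I -> J}) (\prod_t p t (b t)) * (b t0 == i)%:R = p t0 i.
Proof.
have := expect_indicators (pred1 t0) i; rewrite big_pred1_eq => <-.
by apply: eq_bigr => b _; rewrite big_pred1_eq.
Qed.

Lemma expect_indicator_pair t0 t1 i :
  \sum_(b : {ffun I -> J}) (\prod_t p t (b t)) * ((b t0 == i)%:R * (b t1 == i)%:R)
  = p t0 i * p t1 i + (t0 == t1)%:R * (p t0 i - p t0 i ^+ 2).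
Proof.
have [<- | t01] := eqVneq t0 t1.
  under eq_bigr do rewrite -natrM mulnb andbb.
  by rewrite expect_indicator mul1r; ring.
have pair_prod (F : I -> R) : \prod_(t | (t == t0) || (t == t1)) F t = F t0 * F t1.
  rewrite (bigD1 t0) ?eqxx //= (big_pred1 t1) // => t /=.
  by case: (eqVneq t t0) => [->|_]; rewrite ?eqxx ?andbF ?andbT ?(negPf t01).
rewrite mul0r addr0 -(pair_prod (p^~ i)) -expect_indicators.
by apply: eq_bigr => b _; rewrite pair_prod.
Qed.

Lemma expect_count_sq i :
  \sum_(b : {ffun I -> J}) (\prod_t p t (b t)) *
     ((\sum_t ((b t == i)%:R : R)) * (\sum_t ((b t == i)%:R : R) + 1))
  = (\sum_t p t i) ^+ 2 + 2 * \sum_t p t i - \sum_t p t i ^+ 2.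
Proof.
have expand (b : {ffun I -> J}) :
    (\sum_t ((b t == i)%:R : R)) * (\sum_t ((b t == i)%:R : R) + 1)
    = \sum_t (\sum_t' (b t == i)%:R * (b t' == i)%:R + (b t == i)%:R).
  by rewrite mulr_suml; apply: eq_bigr => t _; rewrite mulrDr mulr1 mulr_sumr.
under eq_bigr do rewrite expand mulr_sumr.
rewrite exchange_big /=.
under eq_bigr => t _.
  under eq_bigr do rewrite mulrDr mulr_sumr.
  rewrite big_split /= exchange_big /= expect_indicator.
  under eq_bigr do rewrite expect_indicator_pair.
  rewrite big_split /= -mulr_sumr [X in _ + X + _](bigD1 t) //= eqxx mul1r.
  rewrite [X in _ + (_ + X) + _]big1 ?addr0; last first.
    by move=> t' /negPf; rewrite eq_sym => ->; rewrite mul0r.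
  over.
by rewrite !big_split /= -mulr_suml sumrN; ring.
Qed.

End ProductLaw.

Section Loads.

Variables (R : pzSemiRingType) (n m : nat).

Lemma natr_load (b : state n m) i : (load b i)%:R = \sum_t ((b t == i)%:R : R).
Proof.
rewrite /load -sum1_card natr_sum big_mkcond /=.
by apply: eq_bigr => t _; rewrite inE; case: (b t == i).
Qed.

Lemma sum_over_tasks (a : state n m) (f : 'I_n -> R) :
  \sum_t f (a t) = \sum_j (load a j)%:R * f j.
Proof.
under [RHS]eq_bigr => j _ do rewrite natr_load mulr_suml.
rewrite exchange_big /=; apply: eq_bigr => t _.
rewrite (bigD1 (a t)) //= eqxx mul1r big1 ?addr0 // => j /negPf hj.
by rewrite eq_sym hj mul0r.
Qed.

End Loads.

Lemma deg_gt0 n (e : rel 'I_n) i j : e i j -> (0 < deg e i)%N.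
Proof. by move=> eij; apply/card_gt0P; exists j; rewrite inE. Qed.

Lemma dmax_gt0 n (e : rel 'I_n) i j : e i j -> (0 < dmax e i j)%N.
Proof. by move=> eij; apply: leq_trans (deg_gt0 eij) (leq_maxl _ _). Qed.

Lemma dmax_le_Delta n (e : rel 'I_n) i j : (dmax e i j <= Delta e)%N.
Proof. by rewrite geq_max !leq_bigmax. Qed.

Section Kernel.

Variables (R : realFieldType) (n : nat) (e : rel 'I_n) (s : 'I_n -> R).
Variables (alpha : R) (w : 'I_n -> nat).
Hypothesis e_irr : irreflexive e.
Hypothesis s_gt0 : forall i, 0 < s i.
Hypothesis alpha_ge1 : 1 <= alpha.

Lemma load_gt0_of_gap i j : (s j)^-1 < ell s w i - ell s w j -> (0 < w i)%N.
Proof.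
rewrite lt0n /ell; apply: contraTneq => ->.
have sj_ge0 := ltW (s_gt0 j).
by rewrite mul0r sub0r -leNgt (@le_trans _ _ 0) // ?oppr_le0 ?divr_ge0 ?invr_ge0.
Qed.

Lemma move_prob_bounds i j :
  0 <= move_prob e s alpha w i j <= (if e i j then (deg e i)%:R^-1 else 0).
Proof.
rewrite /move_prob; case: ifPn => [/andP[eij gap] | _]; last first.
  by case: (e i j); rewrite lexx // invr_ge0 ler0n.
have d_gt0 : 0 < (deg e i)%:R :> R by rewrite ltr0n (deg_gt0 eij).
have dm_gt0 : 0 < (dmax e i j)%:R :> R by rewrite ltr0n (dmax_gt0 eij).
have w_gt0 : 0 < (w i)%:R :> R by rewrite ltr0n (load_gt0_of_gap gap).
have sij_gt0 : 0 < (s i)^-1 + (s j)^-1 by rewrite addr_gt0 ?invr_gt0.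
have den_gt0 : 0 < alpha * ((s i)^-1 + (s j)^-1) * (w i)%:R.
  by rewrite !mulr_gt0 // (lt_le_trans ltr01).
have gap_gt0 : 0 < ell s w i - ell s w j by apply: lt_trans gap; rewrite invr_gt0.
have deg_ratio_le1 : (deg e i)%:R / (dmax e i j)%:R <= 1 :> R.
  by rewrite ler_pdivrMr // mul1r ler_nat leq_maxl.
have rate_le1 : (ell s w i - ell s w j) / (alpha * ((s i)^-1 + (s j)^-1) * (w i)%:R) <= 1.
  rewrite ler_pdivrMr // mul1r.
  have ellj_ge0 : 0 <= ell s w j by rewrite divr_ge0 ?ler0n // ltW.
  have elli_le : ell s w i <= ((s i)^-1 + (s j)^-1) * (w i)%:R.
    by rewrite /ell mulrDl mulrC lerDl mulr_ge0 ?invr_ge0 ?ler0n // ltW.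
  have : ((s i)^-1 + (s j)^-1) * (w i)%:R <= alpha * ((s i)^-1 + (s j)^-1) * (w i)%:R.
    by rewrite -mulrA ler_peMl // ltW // mulr_gt0.
  lra.
have ratio_ge0 : 0 <= (deg e i)%:R / (dmax e i j)%:R :> R by rewrite divr_ge0 ?ler0n.
have rate_ge0 : 0 <= (ell s w i - ell s w j) / (alpha * ((s i)^-1 + (s j)^-1) * (w i)%:R).
  by rewrite divr_ge0 // ltW.
have inv_deg_ge0 : 0 <= (deg e i)%:R^-1 :> R by rewrite invr_ge0 ler0n.
rewrite eij; apply/andP; split; first by apply: mulr_ge0 => //; apply: mulr_ge0.
by apply: ler_piMr => //; apply: mulr_ile1.
Qed.

Lemma move_prob_ge0 i j : 0 <= move_prob e s alpha w i j.
Proof. by case/andP: (move_prob_bounds i j). Qed.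

Lemma move_prob_id i : move_prob e s alpha w i i = 0.
Proof. by rewrite /move_prob e_irr. Qed.

Lemma move_prob_nonadj i j : ~~ e i j -> move_prob e s alpha w i j = 0.
Proof. by rewrite /move_prob => /negPf ->. Qed.

Lemma sum_move_prob_le1 i : \sum_k move_prob e s alpha w i k <= 1.
Proof.
apply: le_trans (_ : \sum_k (if e i k then (deg e i)%:R^-1 else 0) <= 1).
  by apply: ler_sum => k _; case/andP: (move_prob_bounds i k).
rewrite -big_mkcond sumr_const /=.
have -> : #|[pred k | e i k]| = deg e i by apply: eq_card => k; rewrite inE.
have [->|d_gt0] := posnP (deg e i); first by rewrite mulr0n ler01.
by rewrite -[_ *+ deg e i]mulr_natr mulVf // pnatr_eq0 -lt0n.
Qed.

Lemma task_transE j i :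
  task_trans e s alpha w j i
  = (if j == i then 1 - \sum_k move_prob e s alpha w j k else 0)
    + move_prob e s alpha w j i.
Proof.
rewrite /task_trans; case: eqP => [->|_]; last by rewrite add0r.
by rewrite move_prob_id addr0 [in RHS](bigD1 i) //= move_prob_id add0r.
Qed.

Lemma sum_task_trans j : \sum_i task_trans e s alpha w j i = 1.
Proof.
under eq_bigr do rewrite task_transE.
rewrite big_split /= (bigD1 j) //= eqxx [X in _ + X + _]big1 ?addr0 ?subrK //.
by move=> i /negPf; rewrite eq_sym => ->.
Qed.

Lemma task_trans_ge0 j i : 0 <= task_trans e s alpha w j i.
Proof.
rewrite task_transE addr_ge0 ?move_prob_ge0 //.
by case: eqP => // _; rewrite subr_ge0 sum_move_prob_le1.
Qed.

End Kernel.

Lemma dist_ge0 (R : realFieldType) n m (e : rel 'I_n) (s : 'I_n -> R) alpha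
    (mu0 : state n m -> R) k a :
  irreflexive e -> (forall i, 0 < s i) -> 1 <= alpha -> (forall a, 0 <= mu0 a) ->
  0 <= dist e s alpha mu0 k a.
Proof.
move=> e_irr s_gt0 alpha_ge1 mu0_ge0; elim: k a => [|k IHk] a //=.
by apply: sumr_ge0 => b _; rewrite mulr_ge0 ?prodr_ge0 // => t _; apply: task_trans_ge0.
Qed.

Lemma Psi1_sub (R : realFieldType) n m (s : 'I_n -> R) (w1 w2 : 'I_n -> nat) :
  Psi1 m s w1 - Psi1 m s w2 =
  \sum_i (w1 i)%:R * ((w1 i)%:R + 1) / s i - \sum_i (w2 i)%:R * ((w2 i)%:R + 1) / s i.
Proof. by rewrite /Psi1; ring. Qed.

Lemma expected_drop (R : realFieldType) n m (e : rel 'I_n) (s : 'I_n -> R) alpha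
    (a : state n m) :
  irreflexive e ->
  let T := task_trans e s alpha (load a) in
  \sum_(b : state n m) step_prob e s alpha a b * (Psi1 m s (load a) - Psi1 m s (load b))
  = \sum_i ((load a i)%:R * ((load a i)%:R + 1)
           - ((\sum_j (load a j)%:R * T j i) ^+ 2 + 2 * \sum_j (load a j)%:R * T j i
              - \sum_j (load a j)%:R * T j i ^+ 2)) / s i.
Proof.
move=> e_irr T; set p := fun t j => T (a t) j.
have p_sum1 t : \sum_j p t j = 1 by apply: sum_task_trans.
under eq_bigr do rewrite Psi1_sub mulrBr.
rewrite sumrB -mulr_suml (sum_prod_law p_sum1) mul1r.
under [X in _ - X]eq_bigr do rewrite mulr_sumr.
rewrite [X in _ - X]exchange_big /= -sumrB; apply: eq_bigr => i _.
rewrite mulrBl; congr (_ - _).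
under eq_bigr do rewrite mulrA.
rewrite -mulr_suml; congr (_ / _).
rewrite -(sum_over_tasks a (T^~ i)) -(sum_over_tasks a (fun j => T j i ^+ 2)).
rewrite -(expect_count_sq p_sum1 i).
by apply: eq_bigr => b _; rewrite natr_load.
Qed.

Lemma sqr_sum_le_card (R : realDomainType) (T : finType) (A : {set T}) (g : T -> R) :
  (\sum_(j in A) g j) ^+ 2 <= #|A|%:R * \sum_(j in A) g j ^+ 2.
Proof.
have sum_sq_diff : \sum_(j in A) \sum_(k in A) (g j - g k) ^+ 2
    = 2 * (#|A|%:R * \sum_(j in A) g j ^+ 2) - 2 * (\sum_(j in A) g j) ^+ 2.
  under eq_bigr do under eq_bigr do rewrite sqrrB.
  under eq_bigr do rewrite big_split /= sumrB sumr_const sumrMnl -mulr_sumr.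
  rewrite big_split /= sumrB !sumrMnl -mulr_suml sumr_const.
  by rewrite -[(\sum_(j in A) g j ^+ 2) *+ #|A|]mulr_natr mulr2n; ring.
have : 0 <= \sum_(j in A) \sum_(k in A) (g j - g k) ^+ 2.
  by apply: sumr_ge0 => j _; apply: sumr_ge0 => k _; rewrite sqr_ge0.
by rewrite sum_sq_diff subr_ge0 ler_pM2l.
Qed.

Definition flow (R : ringType) n (w : 'I_n -> nat) (mp : 'I_n -> 'I_n -> R) (i j : 'I_n) : R :=
  (w i)%:R * mp i j.

Definition pair_gain (R : realFieldType) n (e : rel 'I_n) (s : 'I_n -> R)
    (w : 'I_n -> nat) (phi : 'I_n -> 'I_n -> R) (i j : 'I_n) : R :=
  2 * phi i j * (ell s w i - ell s w j - (s j)^-1)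
  - phi i j ^+ 2 * ((deg e i)%:R / s i + (deg e j)%:R / s j).

Lemma sum_pair_gain (R : realFieldType) n (e : rel 'I_n) (s : 'I_n -> R)
    (w : 'I_n -> nat) (phi : 'I_n -> 'I_n -> R) :
  \sum_i \sum_j pair_gain e s w phi i j
  = \sum_i (- (2 * (w i)%:R + 1) * \sum_j (phi j i - phi i j)
            - (deg e i)%:R * \sum_j (phi j i ^+ 2 + phi i j ^+ 2)
            - \sum_j (phi j i + phi i j)) / s i.
Proof.
pose out i j := ((2 * (w i)%:R + 1) * phi i j - (deg e i)%:R * phi i j ^+ 2 - phi i j) / s i.
pose inc i j := (- (2 * (w i)%:R + 1) * phi j i - (deg e i)%:R * phi j i ^+ 2 - phi j i) / s i.
transitivity (\sum_i \sum_j out i j + \sum_i \sum_j inc j i).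
  rewrite -big_split; apply: eq_bigr => i _; rewrite -big_split; apply: eq_bigr => j _.
  by rewrite /pair_gain /ell /out /inc /=; ring.
rewrite [X in _ + X]exchange_big -big_split; apply: eq_bigr => i _.
rewrite -big_split !mulr_sumr -!sumrB mulr_suml; apply: eq_bigr => j _.
by rewrite /out /inc /=; ring.
Qed.

Section Flows.

Variables (R : realFieldType) (n : nat) (e : rel 'I_n) (s : 'I_n -> R).
Variables (w : 'I_n -> nat) (mp K : 'I_n -> 'I_n -> R).
Hypothesis e_sym : symmetric e.
Hypothesis s_gt0 : forall i, 0 < s i.
Hypothesis mp_ge0 : forall i j, 0 <= mp i j.
Hypothesis mp_id : forall i, mp i i = 0.
Hypothesis mp_nonadj : forall i j, ~~ e i j -> mp i j = 0.
Hypothesis mp_sum_le1 : forall i, \sum_k mp i k <= 1.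
Hypothesis K_def : forall j i, K j i = (if j == i then 1 - \sum_k mp j k else 0) + mp j i.
Local Notation phi := (flow w mp).

Lemma flow_ge0 i j : 0 <= phi i j.
Proof. by rewrite mulr_ge0 ?ler0n. Qed.

Lemma mean_load_after i :
  \sum_j (w j)%:R * K j i = (w i)%:R + \sum_j (phi j i - phi i j).
Proof.
under eq_bigr do rewrite K_def mulrDr.
rewrite big_split /= (bigD1 i) //= eqxx [X in _ + X + _]big1 ?addr0; last first.
  by move=> j /negPf ->; rewrite mulr0.
by rewrite sumrB mulrBr mulr1 mulr_sumr /flow; ring.
Qed.

Lemma variance_le_flow i :
  \sum_j (w j)%:R * (K j i - K j i ^+ 2) <= \sum_j (phi j i + phi i j).
Proof.
have -> : \sum_j (phi j i + phi i j)
    = \sum_j (phi j i + if j == i then \sum_k phi i k else 0).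
  by rewrite !big_split /= -big_mkcond big_pred1_eq.
apply: ler_sum => j _.
rewrite K_def /flow; case: eqVneq => [->|_].
  rewrite mp_id !addr0 mulr0 add0r -mulr_sumr ler_wpM2l ?ler0n //.
  have : 0 <= \sum_k mp i k by apply: sumr_ge0.
  have := mp_sum_le1 i; nra.
by rewrite add0r addr0 ler_wpM2l ?ler0n // lerBlDr lerDl sqr_ge0.
Qed.

Lemma net_flow_sq_le i :
  (\sum_j (phi j i - phi i j)) ^+ 2 <= (deg e i)%:R * \sum_j (phi j i ^+ 2 + phi i j ^+ 2).
Proof.
have -> : \sum_j (phi j i - phi i j) = \sum_(j in [set j | e i j]) (phi j i - phi i j).
  rewrite [RHS]big_mkcond; apply: eq_bigr => j _; rewrite inE.
  case: (boolP (e i j)) => // nij.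
  by rewrite /flow !mp_nonadj // ?mulr0 ?subrr // e_sym.
apply: le_trans (sqr_sum_le_card _ _) _; rewrite ler_wpM2l ?ler0n //.
apply: le_trans (_ : _ <= \sum_(j in [set j | e i j]) (phi j i ^+ 2 + phi i j ^+ 2)) _.
  by apply: ler_sum => j _; have := flow_ge0 i j; have := flow_ge0 j i; nra.
rewrite [X in _ <= X](bigID (mem [set j | e i j])) /= lerDl.
by apply: sumr_ge0 => j _; rewrite addr_ge0 ?sqr_ge0.
Qed.

Lemma local_drop_ge i :
  - (2 * (w i)%:R + 1) * \sum_j (phi j i - phi i j)
  - (deg e i)%:R * \sum_j (phi j i ^+ 2 + phi i j ^+ 2) - \sum_j (phi j i + phi i j)
  <= (w i)%:R * ((w i)%:R + 1)
     - ((\sum_j (w j)%:R * K j i) ^+ 2 + 2 * \sum_j (w j)%:R * K j i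
        - \sum_j (w j)%:R * K j i ^+ 2).
Proof.
(* With mean mu = w_i + D and variance V = mu - M2, the right side is
   -(2 w_i + 1) D - D^2 - V. *)
have var := variance_le_flow i; have sq := net_flow_sq_le i.
have mean := mean_load_after i.
have var_eq : \sum_j (w j)%:R * (K j i - K j i ^+ 2)
             = \sum_j (w j)%:R * K j i - \sum_j (w j)%:R * K j i ^+ 2.
  by rewrite -sumrB; apply: eq_bigr => j _; rewrite mulrBr.
move: var sq; rewrite var_eq mean.
set D := \sum_j (phi j i - phi i j); set M2 := \sum_j (w j)%:R * K j i ^+ 2.
move=> var sq.
have -> : (w i)%:R * ((w i)%:R + 1) - (((w i)%:R + D) ^+ 2 + 2 * ((w i)%:R + D) - M2)
          = - (2 * (w i)%:R + 1) * D - D ^+ 2 - ((w i)%:R + D - M2) by ring.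
lra.
Qed.

Lemma drop_ge_sum_pair_gain :
  \sum_i \sum_j pair_gain e s w phi i j
  <= \sum_i ((w i)%:R * ((w i)%:R + 1)
            - ((\sum_j (w j)%:R * K j i) ^+ 2 + 2 * \sum_j (w j)%:R * K j i
               - \sum_j (w j)%:R * K j i ^+ 2)) / s i.
Proof.
rewrite sum_pair_gain; apply: ler_sum => i _.
by rewrite ler_pM2r ?invr_gt0 // local_drop_ge.
Qed.

End Flows.

Section PairBounds.

Variables (R : realFieldType) (a b smax eps L p : R).
Hypotheses (a_gt0 : 0 < a) (b_gt0 : 0 < b) (eps_gt0 : 0 < eps).
Hypotheses (a_smax : 1 <= a * smax) (b_smax : 1 <= b * smax).
Hypothesis gap : eps * a * b <= L - b.

Lemma quadratic_term_le (di dj dm : R) :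
  eps <= 1 -> 1 <= smax -> 0 <= di <= dm -> 0 <= dj <= dm -> 0 <= p ->
  p * (4 * smax * dm * (a + b)) = L * eps ->
  p ^+ 2 * (di * a + dj * b) <= p * (L - b) / 2.
Proof.
move=> eps_le1 smax_ge1 /andP[di_ge0 di_le] /andP[dj_ge0 dj_le] p_ge0 def_p.
pose d := L - b; have gap_d : eps * a * b <= d := gap; rewrite -/d.
have d_ge0 : 0 <= d by apply: le_trans gap_d; rewrite !mulr_ge0 ?ltW.
have deg_le : p ^+ 2 * (di * a + dj * b) <= p ^+ 2 * (dm * (a + b)).
  by rewrite ler_wpM2l ?sqr_ge0 // mulrDr lerD // ler_wpM2r // ltW.
have L_le : L * eps <= 2 * d * smax.
  have : d * eps <= d * smax by rewrite ler_wpM2l //; lra.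
  have : eps * b <= d * smax.
    apply: le_trans (_ : eps * a * b * smax <= _); last by rewrite ler_wpM2r //; lra.
    have -> : eps * a * b * smax = eps * b * (a * smax) by ring.
    by rewrite ler_peMr // mulr_ge0 // ltW.
  rewrite (_ : L = d + b); last by rewrite /d subrK.
  lra.
have smax_gt0 : 0 < 4 * smax by lra.
rewrite (le_trans deg_le) // -(ler_pM2l smax_gt0).
have -> : 4 * smax * (p ^+ 2 * (dm * (a + b))) = p * (p * (4 * smax * dm * (a + b))).
  by ring.
have -> : 4 * smax * (p * d / 2) = p * (2 * d * smax) by field.
by rewrite def_p ler_wpM2l.
Qed.

Lemma linear_term_ge (dm D : R) :
  0 < dm <= D -> p * (4 * smax * dm * (a + b)) = L * eps ->
  eps ^+ 2 / (8 * D * smax ^+ 3) <= p * (L - b).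
Proof.
move=> /andP[dm_gt0 dm_le] def_p.
pose d := L - b; have gap_d : eps * a * b <= d := gap; rewrite -/d.
have smax_gt0 : 0 < smax by rewrite -(pmulr_rgt0 _ a_gt0) (lt_le_trans ltr01).
have D_gt0 : 0 < D := lt_le_trans dm_gt0 dm_le.
have K_gt0 : 0 < 4 * smax * dm * (a + b) by rewrite !mulr_gt0 ?addr_gt0.
have Ld_ge : eps * a * b * b <= d * L.
  have eab_ge0 : 0 <= eps * a * b by rewrite !mulr_ge0 // ltW.
  apply: ler_pM => //; first exact: ltW.
  by rewrite -subr_ge0 (le_trans eab_ge0 gap_d).
have a_le : a <= smax ^+ 2 * a * b * b.
  have -> : smax ^+ 2 * a * b * b = a * ((b * smax) * (b * smax)) by ring.
  by rewrite ler_pMr // -[1]mulr1 ler_pM.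
have b_le : b <= smax ^+ 2 * a * b * b.
  have -> : smax ^+ 2 * a * b * b = b * ((a * smax) * (b * smax)) by ring.
  by rewrite ler_pMr // -[1]mulr1 ler_pM.
have degsum_le : dm * (a + b) <= 2 * D * smax ^+ 2 * a * b * b.
  apply: le_trans (_ : D * (a + b) <= _); first by rewrite ler_wpM2r // ltW // addr_gt0.
  have := ltW D_gt0; nra.
rewrite ler_pdivrMr ?mulr_gt0 ?exprn_gt0 // -(ler_pM2r K_gt0).
have -> : p * d * (8 * D * smax ^+ 3) * (4 * smax * dm * (a + b))
          = p * (4 * smax * dm * (a + b)) * d * (8 * D * smax ^+ 3) by ring.
have -> : eps ^+ 2 * (4 * smax * dm * (a + b))
          = 4 * smax * eps * (eps * (dm * (a + b))) by ring.
rewrite def_p.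
have -> : L * eps * d * (8 * D * smax ^+ 3)
          = 4 * smax * eps * (2 * D * smax ^+ 2 * (d * L)) by ring.
rewrite ler_pM2l ?mulr_gt0 //.
have : 0 <= 2 * D * smax ^+ 2 by rewrite !mulr_ge0 // ?exprn_ge0 ltW.
have := ltW eps_gt0; nra.
Qed.

End PairBounds.

(* The left side of the conclusion is 1 / (ki kj eps), the right side is
   (wi kj - (wj + 1) ki) / (ki kj eps) with a positive integer numerator. *)
Lemma gap_ge_of_multiples (R : realFieldType) (eps : R) (ki kj wi wj : nat) :
  0 < eps -> (0 < ki)%N -> (0 < kj)%N ->
  (kj%:R * eps)^-1 < wi%:R / (ki%:R * eps) - wj%:R / (kj%:R * eps) ->
  eps * (ki%:R * eps)^-1 * (kj%:R * eps)^-1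
  <= wi%:R / (ki%:R * eps) - wj%:R / (kj%:R * eps) - (kj%:R * eps)^-1.
Proof.
move=> eps_gt0 ki_gt0 kj_gt0.
have ki_gt0' : 0 < ki%:R :> R by rewrite ltr0n.
have kj_gt0' : 0 < kj%:R :> R by rewrite ltr0n.
have den_gt0 : 0 < ki%:R * kj%:R * eps :> R by rewrite !mulr_gt0.
have gapE : wi%:R / (ki%:R * eps) - wj%:R / (kj%:R * eps) - (kj%:R * eps)^-1
            = ((wi * kj)%N%:R - ((wj + 1) * ki)%N%:R) / (ki%:R * kj%:R * eps) :> R.
  by rewrite !natrM natrD; field; rewrite !gt_eqF.
have lhsE : eps * (ki%:R * eps)^-1 * (kj%:R * eps)^-1 = 1 / (ki%:R * kj%:R * eps) :> R.
  by field; rewrite !gt_eqF.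
rewrite -subr_gt0 gapE lhsE pmulr_lgt0 ?invr_gt0 // subr_gt0 ltr_nat => lt_num.
by rewrite ler_pM2r ?invr_gt0 // lerBrDr addrC natr1 ler_nat.
Qed.

Lemma has_loadP n m (x : 'I_n -> nat) (a : state n m) : has_load x a -> load a = x.
Proof. by move/forallP=> ax; apply: functional_extensionality => i; apply/eqP. Qed.

Lemma not_NE_gap (R : realFieldType) n (e : rel 'I_n) (s : 'I_n -> R) (w : 'I_n -> nat) :
  ~ is_NE e s w -> exists i j, e i j /\ (s j)^-1 < ell s w i - ell s w j.
Proof.
move=> notNE.
case: (pickP [pred ij : 'I_n * 'I_n | e ij.1 ij.2 && ((s ij.2)^-1 < ell s w ij.1 - ell s w ij.2)]).
  by move=> [i j] /andP[eij gap]; exists i, j.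
move=> none; case: notNE => i j eij.
by have /negbT := none (i, j); rewrite /= eij /= -leNgt.
Qed.

Lemma ler_weighted_mean (R : realFieldType) (T : finType) (P : pred T) (mu f : T -> R) c :
  (forall a, P a -> 0 <= mu a) -> 0 < \sum_(a | P a) mu a ->
  (forall a, P a -> c <= f a) ->
  c <= (\sum_(a | P a) mu a * f a) / \sum_(a | P a) mu a.
Proof.
move=> mu_ge0 mu_gt0 f_ge.
rewrite ler_pdivlMr // mulr_sumr; apply: ler_sum => a Pa.
by rewrite mulrC ler_wpM2l ?mu_ge0 ?f_ge.
Qed.

Section Protocol.

Variables (R : realFieldType) (n : nat) (e : rel 'I_n) (s : 'I_n -> R) (eps : R).
Hypothesis e_sym : symmetric e.
Hypothesis e_irr : irreflexive e.
Hypotheses (eps_gt0 : 0 < eps) (eps_le1 : eps <= 1).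
Hypothesis s_mult : forall i, exists k : nat, (0 < k)%N /\ s i = k%:R * eps.
Hypothesis s_ge1 : forall i, 1 <= s i.
Hypothesis s_min : exists i, s i = 1.

Local Notation alpha := (4 * smax s / eps).
Local Notation bound := (eps ^+ 2 / (8 * (Delta e)%:R * smax s ^+ 3)).

Lemma s_gt0 i : 0 < s i.
Proof. exact: lt_le_trans ltr01 (s_ge1 i). Qed.

Lemma s_le_smax i : s i <= smax s.
Proof. by apply: le_bigmax_seq => //; exact: mem_index_enum. Qed.

Lemma smax_ge1 : 1 <= smax s.
Proof. by have [i <-] := s_min; exact: s_le_smax. Qed.

Lemma alpha_ge1 : 1 <= alpha.
Proof. rewrite ler_pdivlMr // mul1r; have := smax_ge1; have := eps_le1; lra. Qed.

Lemma bound_ge0 : 0 <= bound.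
Proof.
by rewrite divr_ge0 ?sqr_ge0 // !mulr_ge0 ?ler0n ?exprn_ge0 // (le_trans ler01 smax_ge1).
Qed.

Lemma pair_gain_ge_bound (w : 'I_n -> nat) i j :
  e i j -> (s j)^-1 < ell s w i - ell s w j ->
  bound <= pair_gain e s w (flow w (move_prob e s alpha w)) i j.
Proof.
move=> eij gap.
set p := flow w (move_prob e s alpha w) i j.
have inv_gt0 k : 0 < (s k)^-1 by rewrite invr_gt0 s_gt0.
have inv_smax k : 1 <= (s k)^-1 * smax s by rewrite mulrC ler_pdivlMr ?s_gt0 // mul1r s_le_smax.
have gap_d : eps * (s i)^-1 * (s j)^-1 <= ell s w i - ell s w j - (s j)^-1.
  have [[ki [ki_gt0 s_i]] [kj [kj_gt0 s_j]]] := (s_mult i, s_mult j).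
  by move: gap; rewrite /ell s_i s_j; apply: gap_ge_of_multiples.
have def_p : p * (4 * smax s * (dmax e i j)%:R * ((s i)^-1 + (s j)^-1))
             = (ell s w i - ell s w j) * eps.
  have w_gt0 : 0 < (w i)%:R :> R by rewrite ltr0n (load_gt0_of_gap s_gt0 gap).
  have dm_gt0 : 0 < (dmax e i j)%:R :> R by rewrite ltr0n (dmax_gt0 eij).
  have d_gt0 : 0 < (deg e i)%:R :> R by rewrite ltr0n (deg_gt0 eij).
  have smax_gt0 : 0 < smax s by apply: lt_le_trans ltr01 smax_ge1.
  rewrite /p /flow /move_prob eij gap /=; field.
  by rewrite !gt_eqF ?addr_gt0 ?s_gt0.
have p_ge0 : 0 <= p by rewrite /p /flow mulr_ge0 ?ler0n ?(move_prob_ge0 e w s_gt0 alpha_ge1).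
have di : 0 <= ((deg e i)%:R : R) <= (dmax e i j)%:R by rewrite ler0n ler_nat leq_maxl.
have dj : 0 <= ((deg e j)%:R : R) <= (dmax e i j)%:R by rewrite ler0n ler_nat leq_maxr.
have dm : 0 < ((dmax e i j)%:R : R) <= (Delta e)%:R.
  by rewrite ltr0n ler_nat dmax_gt0 ?dmax_le_Delta.
have loss := quadratic_term_le (inv_gt0 i) (inv_gt0 j) eps_gt0 (inv_smax i) gap_d
  eps_le1 smax_ge1 di dj p_ge0 def_p.
have gain := linear_term_ge (inv_gt0 i) (inv_gt0 j) eps_gt0 (inv_smax i) (inv_smax j) gap_d dm def_p.
have := bound_ge0; rewrite /pair_gain -/p; lra.
Qed.

Lemma pair_gain_ge0 (w : 'I_n -> nat) i j :
  0 <= pair_gain e s w (flow w (move_prob e s alpha w)) i j.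
Proof.
have [/andP[eij gap] | no_move] := boolP (e i j && ((s j)^-1 < ell s w i - ell s w j)).
  exact: le_trans bound_ge0 (pair_gain_ge_bound eij gap).
have flow0 : flow w (move_prob e s alpha w) i j = 0.
  by rewrite /flow /move_prob (negPf no_move) mulr0.
by rewrite /pair_gain flow0 expr0n /= !(mulr0, mul0r) subr0.
Qed.

Lemma expected_drop_ge m (a : state n m) :
  ~ is_NE e s (load a) ->
  bound <= \sum_(b : state n m)
             step_prob e s alpha a b * (Psi1 m s (load a) - Psi1 m s (load b)).
Proof.
move=> /not_NE_gap[i0 [j0 [eij0 gap0]]].
rewrite expected_drop //=.
apply: le_trans _ (drop_ge_sum_pair_gain _ e_sym s_gt0
  (move_prob_ge0 e _ s_gt0 alpha_ge1) (move_prob_id _ _ _ e_irr) (move_prob_nonadj _ _ _)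
  (sum_move_prob_le1 _ _ s_gt0 alpha_ge1) (task_transE _ _ _ e_irr)).
rewrite (bigD1 i0) //= (bigD1 j0) //= -addrA.
rewrite ler_wpDr ?(pair_gain_ge_bound eij0 gap0) // addr_ge0 ?sumr_ge0 // => [j _|i _].
  exact: pair_gain_ge0.
by apply: sumr_ge0 => j _; apply: pair_gain_ge0.
Qed.

End Protocol.

Theorem lemma25 (R : realFieldType) (n m : nat) (e : rel 'I_n)
  (e_sym : symmetric e) (e_irr : irreflexive e)
  (s : 'I_n -> R) (eps : R)
  (eps_pos : 0 < eps) (eps_le1 : eps <= 1)
  (s_mult : forall i, exists k : nat, (0 < k)%N /\ s i = k%:R * eps)
  (s_ge1 : forall i, 1 <= s i) (s_min : exists i, s i = 1)
  (mu0 : state n m -> R)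
  (mu0_ge0 : forall a, 0 <= mu0 a) (mu0_sum : \sum_(a : state n m) mu0 a = 1)
  (x : 'I_n -> nat) (k : nat)
  (x_pos : 0 < \sum_(a : state n m | has_load x a)
                 dist e s (4 * smax s / eps) mu0 k a)
  (x_notNE : ~ is_NE e s x) :
  cond_drop e s (4 * smax s / eps) mu0 k x
    >= eps ^+ 2 / (8 * (Delta e)%:R * smax s ^+ 3).
Proof.
rewrite /cond_drop.
under eq_bigr => a _ do under eq_bigr => b _ do rewrite -mulrA.
under eq_bigr => a _ do rewrite -mulr_sumr.
apply: ler_weighted_mean => // a xa.
  exact: dist_ge0 e_irr (s_gt0 s_ge1) (alpha_ge1 eps_pos eps_le1 s_min) mu0_ge0.
by apply: expected_drop_ge => //; rewrite (has_loadP xa).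
Qed.
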